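(* Let $G=(V,E)$ be a finite, connected, simple graph with at least two vertices and generic weights $(w_x)_{x\in\Sigma}$, $\Sigma=V\cup E$; let $M$ be the ground state and $x\in\Sigma$. Suppose the weight of some $y\in\Sigma$ is increased or decreased by $\varepsilon<F_G(x)$, the resulting weights being generic, and let $\tilde M$ be the ground state for the new weights. Then $x\notin M\,\Delta\,\tilde M$.
   Context: A matching of $G$ is a set $M\subset\Sigma$ such that every vertex either belongs to $M$ or is an endpoint of exactly one edge of $M$, but not both. $H(M)=\sum_{z\in M}w_z$; the ground state is the matching minimising $H$. Weights are generic if no nontrivial integer combination of finitely many weights vanishes. For $x\in\Sigma$, $M_{G,x,1}$ (resp. $M_{G,x,0}$) is the matching of minimal weight among those containing $x$ (resp. not containing $x$). The transition point is $K_{G,x}=H(M_{G,x,0})-H(M_{G,x,1})+w_x$ and the flexibility of $x$ is $F_G(x)=|K_{G,x}-w_x|$; all computed with the original weights. *)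

From HB Require Import structures.
From mathcomp Require Import all_boot all_order all_algebra.
Set Implicit Arguments. Unset Strict Implicit. Unset Printing Implicit Defensive.
Import Order.TTheory GRing.Theory Num.Theory.
Local Open Scope ring_scope.

(* A simple graph on a finite vertex type V is given by a symmetric,
   irreflexive adjacency relation adj.  Edges are the 2-element sets
   {u, v} with adj u v. *)
Definition is_edge (V : finType) (adj : rel V) : pred {set V} :=
  fun e => [exists u, exists v, adj u v && (e == [set u; v])].

Definition edge (V : finType) (adj : rel V) := {e : {set V} | is_edge adj e}.

Notation Sigma V adj := (V + edge adj)%type.

Section Matchings.
Variables (V : finType) (adj : rel V) (R : realFieldType).
Variable w : Sigma V adj -> R.

Definition deg_in (M : {set Sigma V adj}) (v : V) : nat :=
  #|[set e : edge adj | (inr e \in M) && (v \in val e)]|.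

Definition is_matching (M : {set Sigma V adj}) : bool :=
  [forall v : V, if inl v \in M then deg_in M v == 0%N else deg_in M v == 1%N].

Definition H (M : {set Sigma V adj}) : R := \sum_(z in M) w z.

Definition ground_state (M : {set Sigma V adj}) : Prop :=
  is_matching M /\ forall M', is_matching M' -> H M <= H M'.

Definition generic : Prop :=
  forall c : Sigma V adj -> int, (exists z, c z != 0) ->
    \sum_(z : Sigma V adj) (c z)%:~R * w z != 0.

Definition min_matching (P : pred {set Sigma V adj}) : option {set Sigma V adj} :=
  let Q := [pred M | is_matching M && P M] in
  if [pick M in Q] is Some M0 then Some (Order.arg_min M0 (fun M => M \in Q) (fun M => H M)) else None.

Definition Mx (x : Sigma V adj) (b : bool) : {set Sigma V adj} :=
  odflt set0 (min_matching (fun M : {set Sigma V adj} => (x \in M) == b)).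

Definition transition_point (x : Sigma V adj) : R :=
  H (Mx x false) - H (Mx x true) + w x.

Definition flexibility (x : Sigma V adj) : R := `|transition_point x - w x|.

End Matchings.

(* If x lies in exactly one of M and Mt, then Mt is a competitor of the
   opposite x-class, so its w-weight exceeds that of the ground state M by at
   least the flexibility of x.  On the other hand, changing a single weight by
   eps changes the weight of every matching by at most eps, so the w'-ground
   state Mt is at most eps heavier than M for w. *)
From HB Require Import structures.
From mathcomp Require Import all_boot all_order all_algebra.
From mathcomp Require Import lra.
Set Implicit Arguments. Unset Strict Implicit. Unset Printing Implicit Defensive.
Import Order.TTheory GRing.Theory Num.Theory.
Local Open Scope ring_scope.

Section Flexibility.
Variables (V : finType) (adj : rel V) (R : realFieldType).
Implicit Types (w : Sigma V adj -> R) (x : Sigma V adj) (M Z : {set Sigma V adj}).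

Lemma Mx_spec w x (b : bool) Z :
  is_matching Z -> (x \in Z) == b ->
  is_matching (Mx w x b) /\ H w (Mx w x b) <= H w Z.
Proof.
move=> mZ xZ; rewrite /Mx /min_matching.
case: pickP => [M0 M0_in|none]; last first.
  by have /negP[] := negbT (none Z); rewrite inE; apply/andP.
case: arg_minP => // M1 /andP[mM1 _] M1_min.
by split => //; apply: M1_min; apply/andP.
Qed.

Lemma ground_state_H_Mx w M x :
  ground_state w M -> H w (Mx w x (x \in M)) = H w M.
Proof.
case=> mM M_min; have [mMx Mx_le] := Mx_spec w mM (eqxx (x \in M)).
by apply/eqP; rewrite eq_le Mx_le M_min.
Qed.

Lemma flexibility_le_H_sub w M Z x :
  ground_state w M -> is_matching Z -> (x \in Z) = ~~ (x \in M) ->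
  flexibility w x <= H w Z - H w M.
Proof.
move=> gsM mZ /eqP xZ; have [_ M_min] := gsM.
have [mMx Mx_le] := Mx_spec w mZ xZ; have Mx_ge := M_min _ mMx.
have := ground_state_H_Mx x gsM; rewrite /flexibility /transition_point addrK.
case: (x \in M) Mx_le Mx_ge => /= Mx_le Mx_ge HM.
- by rewrite HM ger0_norm ?subr_ge0 // lerD2r.
- by rewrite HM ler0_norm ?opprB ?subr_le0 // lerD2r.
Qed.

Lemma H_update_weight w w' y :
  (forall z, z != y -> w' z = w z) ->
  forall Z, H w' Z = H w Z + (y \in Z)%:R * (w' y - w y).
Proof.
move=> w'_other Z; rewrite /H.
under [X in X = _]eq_bigr => z _ do rewrite -(subrK (w z) (w' z)) addrC.
rewrite big_split /=; congr (_ + _).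
have [yZ|yZ] := boolP (y \in Z).
  rewrite (bigD1 y) //= big1 ?addr0 ?mul1r // => z /andP[_ zy].
  by rewrite w'_other // subrr.
rewrite mul0r big1 // => z zZ; rewrite w'_other ?subrr //.
by apply: contraNneq yZ => <-.
Qed.

Lemma ground_state_update_weight w w' y M Mt :
  (forall z, z != y -> w' z = w z) ->
  is_matching M -> ground_state w' Mt -> H w Mt - H w M <= `|w' y - w y|.
Proof.
move=> w'_other mM [_ Mt_min]; have := Mt_min M mM.
rewrite !(H_update_weight w'_other); set d := w' y - w y.
have [d_ge0|d_lt0] := lerP 0 d.
  by rewrite ger0_norm //; case: (y \in M); case: (y \in Mt) => /=; lra.
by rewrite ltr0_norm //; case: (y \in M); case: (y \in Mt) => /=; lra.
Qed.

End Flexibility.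

Theorem lemma2p11 (V : finType) (adj : rel V) (R : realFieldType)
  (adj_sym : symmetric adj) (adj_irr : irreflexive adj)
  (G_conn : forall u v : V, connect adj u v) (G_two : (1 < #|V|)%N)
  (w : Sigma V adj -> R) (w_gen : generic w)
  (M : {set Sigma V adj}) (M_gs : ground_state w M)
  (x y : Sigma V adj) (eps : R) (eps_ge0 : 0 <= eps)
  (eps_lt : eps < flexibility w x)
  (w' : Sigma V adj -> R)
  (w'_y : w' y = w y + eps \/ w' y = w y - eps)
  (w'_other : forall z, z != y -> w' z = w z)
  (w'_gen : generic w')
  (Mt : {set Sigma V adj}) (Mt_gs : ground_state w' Mt) :
  x \notin (M :\: Mt) :|: (Mt :\: M).
Proof.
have shift : `|w' y - w y| = eps.
  by case: w'_y => ->; rewrite addrAC subrr add0r ?normrN ger0_norm.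
have gap := ground_state_update_weight w'_other M_gs.1 Mt_gs.
apply: contraTN eps_lt => x_sym; rewrite -leNgt -shift (le_trans _ gap) //.
apply: flexibility_le_H_sub M_gs Mt_gs.1 _.
by move: x_sym; rewrite !inE; case: (x \in M); case: (x \in Mt).
Qed.
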